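(* (1) Each of the following assignments on the generators of $FVB_n$ extends to a representation of $FVB_n$ (all generators not listed are fixed): (a) for $m\in\mathbb{Z}$, $\theta_{1,m}:FVB_n\to{\rm Aut}(F_{2n})$, $\theta_{1,m}(\sigma_i):x_i\mapsto x_{i+1}y_{i+1}^m,\ x_{i+1}\mapsto x_iy_{i+1}^{-m}$; $\theta_{1,m}(\rho_i):x_i\leftrightarrow x_{i+1},\ y_i\leftrightarrow y_{i+1}$; (b) $\theta_2:FVB_n\to{\rm Aut}(F_{2n+1})$, $\theta_2(\sigma_i):x_i\mapsto x_{i+1}y_{i+1}^z,\ x_{i+1}\mapsto x_i(y_{i+1}^{-1})^z$; $\theta_2(\rho_i):x_i\leftrightarrow x_{i+1},\ y_i\leftrightarrow y_{i+1}$; (c) $\theta_3:FVB_n\to{\rm Aut}(K)$, $\theta_3(\sigma_i):x_i\mapsto x_{i+1}y_{i+1},\ x_{i+1}\mapsto x_iy_{i+1}^{-1}$; $\theta_3(\rho_i):x_i\mapsto x_{i+1}z,\ x_{i+1}\mapsto x_iz^{-1},\ y_i\leftrightarrow y_{i+1}$; (d) $\theta_4:FVB_n\to{\rm Aut}(K)$, $\theta_4(\sigma_i):x_i\mapsto x_{i+1}y_{i+1},\ x_{i+1}\mapsto x_iy_{i+1}^{-1}$; $\theta_4(\rho_i):x_i\mapsto x_{i+1}^z,\ x_{i+1}\mapsto x_i^{z^{-1}},\ y_i\leftrightarrow y_{i+1}$. (2) For $m\ne0$, $\ker(\theta_{1,m})=\ker(\theta_2)=\ker(\theta_3)=\ker(\theta_4)=\ker(\theta)$,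 where $\theta:FVB_n\to{\rm Aut}(F_{2n})$ is the representation with $\theta(\sigma_i):x_i\mapsto x_{i+1}y_{i+1},\ x_{i+1}\mapsto x_iy_{i+1}^{-1}$ and $\theta(\rho_i):x_i\leftrightarrow x_{i+1},\ y_i\leftrightarrow y_{i+1}$.
   Context: $FVB_n$ is the flat virtual braid group: generators $\sigma_1,\dots,\sigma_{n-1},\rho_1,\dots,\rho_{n-1}$, relations $\sigma_i\sigma_j=\sigma_j\sigma_i$, $\rho_i\rho_j=\rho_j\rho_i$, $\sigma_i\rho_j=\rho_j\sigma_i$ for $|i-j|\ge2$; $\sigma_i\sigma_{i+1}\sigma_i=\sigma_{i+1}\sigma_i\sigma_{i+1}$; $\rho_i\rho_{i+1}\rho_i=\rho_{i+1}\rho_i\rho_{i+1}$; $\rho_i\rho_{i+1}\sigma_i=\sigma_{i+1}\rho_i\rho_{i+1}$; $\rho_i^2=\sigma_i^2=1$. $F_{2n}$ is free on $x_1,\dots,x_n,y_1,\dots,y_n$; $F_{2n+1}$ is free on $x_1,\dots,x_n,y_1,\dots,y_n,z$; $K=F_n*(F_n\times\mathbb{Z})=\langle x_1,\dots,x_n,y_1,\dots,y_n,z\mid [y_i,z]=1,\ i=1,\dots,n\rangle$. The notation $a^b$ denotes the conjugate $b^{-1}ab$, and ''$a\leftrightarrow b$'' means $a\mapsto b$, $b\mapsto a$. Automorphisms compose on the right: $(fg)(x)=g(f(x))$. *)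

(* Finitely presented groups are handled as words modulo the
   congruence generated by free cancellation and relators. *)
From mathcomp Require Import all_boot all_algebra.
From mathcomp Require Import zify.
Set Implicit Arguments. Unset Strict Implicit. Unset Printing Implicit Defensive.

(* a letter (a, false) is the generator a, (a, true) is a^-1 *)
Definition letter (A : Type) := (A * bool)%type.
Definition word (A : Type) := seq (letter A).

Definition inv_letter {A : Type} (l : letter A) : letter A := (l.1, ~~ l.2).
Definition winv {A : Type} (w : word A) : word A := rev (map inv_letter w).
Definition gen {A : Type} (a : A) : word A := [:: (a, false)].
Definition igen {A : Type} (a : A) : word A := [:: (a, true)].

Definition wpow {A : Type} (w : word A) (k : int) : word A :=
  match k with
  | Posz n => flatten (nseq n w)
  | Negz n => flatten (nseq n.+1 (winv w))
  end.

(* conjugate a^b = b^-1 a b *)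
Definition wconj {A : Type} (a b : word A) : word A := winv b ++ a ++ b.

Inductive peq {A : Type} (R : word A -> Prop) : word A -> word A -> Prop :=
| peq_refl w : peq R w w
| peq_sym u v : peq R u v -> peq R v u
| peq_trans u v w : peq R u v -> peq R v w -> peq R u w
| peq_cancel u a v : peq R (u ++ a :: inv_letter a :: v) (u ++ v)
| peq_rel u r v : R r -> peq R (u ++ r ++ v) (u ++ v).

Definition eqrel {A : Type} (u v : word A) : word A := u ++ winv v.

Definition norels {A : Type} : word A -> Prop := fun _ => False.

Definition wsubst {A B : Type} (f : A -> word B) (w : word A) : word B :=
  flatten (map (fun l : letter A => if l.2 then winv (f l.1) else f l.1) w).

Definition is_hom {A : Type} (R : word A -> Prop) (f : A -> word A) : Prop :=
  forall r, R r -> peq R (wsubst f r) [::].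

(* Action of a word q = l1 ... lk in the generators of Gamma, where each letter l
   acts via Phi l; automorphisms compose on the right: (fg)(x) = g(f(x)). *)
Definition act {Y X : Type} (Phi : letter Y -> X -> word X) (q : word Y) (x : X)
  : word X :=
  foldl (fun w l => wsubst (Phi l) w) (gen x) q.

(* Phi is a homomorphism Gamma = <Y | Q> -> Aut(<X | R>) whose value on the
   generator y is phi y: every Phi l is an endomorphism of <X|R>, Phi of an
   inverse letter is inverse to Phi of the letter (so all are automorphisms),
   and every relator of Gamma acts trivially. *)
Definition rep_witness {Y X : Type} (Q : word Y -> Prop) (R : word X -> Prop)
  (phi : Y -> X -> word X) (Phi : letter Y -> X -> word X) : Prop :=
  [/\ forall y, Phi (y, false) = phi y,
      forall l, is_hom R (Phi l),
      forall l x, peq R (wsubst (Phi (inv_letter l)) (Phi l x)) (gen x)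
    & forall q, Q q -> forall x, peq R (act Phi q x) (gen x)].

Definition extends_to_rep {Y X : Type} (Q : word Y -> Prop) (R : word X -> Prop)
  (phi : Y -> X -> word X) : Prop := exists Phi, rep_witness Q R phi Phi.

Definition in_ker {Y X : Type} (Q : word Y -> Prop) (R : word X -> Prop)
  (phi : Y -> X -> word X) (w : word Y) : Prop :=
  forall Phi, rep_witness Q R phi Phi -> forall x, peq R (act Phi w x) (gen x).

(* Sig i (i : 'I_n.-1, 0-based) stands for sigma_{i+1}, Rho i for rho_{i+1} *)
Inductive fvb_gen (n : nat) : Type := Sig of 'I_n.-1 | Rho of 'I_n.-1.

Definition far (i j : nat) : bool := (i.+1 < j) || (j.+1 < i).

Inductive fvb_rel (n : nat) : word (fvb_gen n) -> Prop :=
| fr_ss (i j : 'I_n.-1) : far i j ->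
    fvb_rel (eqrel (gen (Sig i) ++ gen (Sig j)) (gen (Sig j) ++ gen (Sig i)))
| fr_rr (i j : 'I_n.-1) : far i j ->
    fvb_rel (eqrel (gen (Rho i) ++ gen (Rho j)) (gen (Rho j) ++ gen (Rho i)))
| fr_sr (i j : 'I_n.-1) : far i j ->
    fvb_rel (eqrel (gen (Sig i) ++ gen (Rho j)) (gen (Rho j) ++ gen (Sig i)))
| fr_sss (i j : 'I_n.-1) : j = i.+1 :> nat ->
    fvb_rel (eqrel (gen (Sig i) ++ gen (Sig j) ++ gen (Sig i))
                   (gen (Sig j) ++ gen (Sig i) ++ gen (Sig j)))
| fr_rrr (i j : 'I_n.-1) : j = i.+1 :> nat ->
    fvb_rel (eqrel (gen (Rho i) ++ gen (Rho j) ++ gen (Rho i))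
                   (gen (Rho j) ++ gen (Rho i) ++ gen (Rho j)))
| fr_rrs (i j : 'I_n.-1) : j = i.+1 :> nat ->
    fvb_rel (eqrel (gen (Rho i) ++ gen (Rho j) ++ gen (Sig i))
                   (gen (Sig j) ++ gen (Rho i) ++ gen (Rho j)))
| fr_r2 (i : 'I_n.-1) : fvb_rel (gen (Rho i) ++ gen (Rho i))
| fr_s2 (i : 'I_n.-1) : fvb_rel (gen (Sig i) ++ gen (Sig i)).

Lemma lo_proof (n : nat) (i : 'I_n.-1) : (i : nat) < n.
Proof. have := ltn_ord i; lia. Qed.
Lemma hi_proof (n : nat) (i : 'I_n.-1) : (i : nat).+1 < n.
Proof. have := ltn_ord i; lia. Qed.

Definition lo (n : nat) (i : 'I_n.-1) : 'I_n := Ordinal (lo_proof i).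
Definition hi (n : nat) (i : 'I_n.-1) : 'I_n := Ordinal (hi_proof i).

Definition swp (n : nat) (i : 'I_n.-1) (k : 'I_n) : 'I_n :=
  if k == lo i then hi i else if k == hi i then lo i else k.

(* generators of F_{2n}: x_1..x_n, y_1..y_n (0-based indices) *)
Inductive gen2 (n : nat) : Type := x2 of 'I_n | y2 of 'I_n.
(* generators of F_{2n+1} and of K: x_1..x_n, y_1..y_n, z *)
Inductive gen3 (n : nat) : Type := x3 of 'I_n | y3 of 'I_n | z3.

(* F_{2n+1}: no relators; K = F_n * (F_n x Z): relators [y_i, z] *)
Inductive K_rel (n : nat) : word (gen3 n) -> Prop :=
| K_comm (i : 'I_n) :
    K_rel (igen (y3 i) ++ igen (z3 n) ++ gen (y3 i) ++ gen (z3 n)).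

Definition theta1 (n : nat) (m : int) (a : fvb_gen n) (g : gen2 n) : word (gen2 n) :=
  match a with
  | Sig i => match g with
     | x2 k => if k == lo i then gen (x2 (hi i)) ++ wpow (gen (y2 (hi i))) m
               else if k == hi i then gen (x2 (lo i)) ++ wpow (gen (y2 (hi i))) (- m)
               else gen (x2 k)
     | y2 k => gen (y2 k)
     end
  | Rho i => match g with
     | x2 k => gen (x2 (swp i k))
     | y2 k => gen (y2 (swp i k))
     end
  end.

Definition theta (n : nat) (a : fvb_gen n) (g : gen2 n) : word (gen2 n) :=
  match a with
  | Sig i => match g with
     | x2 k => if k == lo i then gen (x2 (hi i)) ++ gen (y2 (hi i))
               else if k == hi i then gen (x2 (lo i)) ++ igen (y2 (hi i))
               else gen (x2 k)
     | y2 k => gen (y2 k)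
     end
  | Rho i => match g with
     | x2 k => gen (x2 (swp i k))
     | y2 k => gen (y2 (swp i k))
     end
  end.

Definition theta2 (n : nat) (a : fvb_gen n) (g : gen3 n) : word (gen3 n) :=
  match a with
  | Sig i => match g with
     | x3 k => if k == lo i then gen (x3 (hi i)) ++ wconj (gen (y3 (hi i))) (gen (z3 n))
               else if k == hi i then
                 gen (x3 (lo i)) ++ wconj (igen (y3 (hi i))) (gen (z3 n))
               else gen (x3 k)
     | y3 k => gen (y3 k)
     | z3 => gen (z3 n)
     end
  | Rho i => match g with
     | x3 k => gen (x3 (swp i k))
     | y3 k => gen (y3 (swp i k))
     | z3 => gen (z3 n)
     end
  end.

Definition thetaK_sig (n : nat) (i : 'I_n.-1) (g : gen3 n) : word (gen3 n) :=
  match g with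
  | x3 k => if k == lo i then gen (x3 (hi i)) ++ gen (y3 (hi i))
            else if k == hi i then gen (x3 (lo i)) ++ igen (y3 (hi i))
            else gen (x3 k)
  | y3 k => gen (y3 k)
  | z3 => gen (z3 n)
  end.

Definition theta3 (n : nat) (a : fvb_gen n) (g : gen3 n) : word (gen3 n) :=
  match a with
  | Sig i => thetaK_sig i g
  | Rho i => match g with
     | x3 k => if k == lo i then gen (x3 (hi i)) ++ gen (z3 n)
               else if k == hi i then gen (x3 (lo i)) ++ igen (z3 n)
               else gen (x3 k)
     | y3 k => gen (y3 (swp i k))
     | z3 => gen (z3 n)
     end
  end.

Definition theta4 (n : nat) (a : fvb_gen n) (g : gen3 n) : word (gen3 n) :=
  match a with
  | Sig i => thetaK_sig i g
  | Rho i => match g with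
     | x3 k => if k == lo i then wconj (gen (x3 (hi i))) (gen (z3 n))
               else if k == hi i then wconj (gen (x3 (lo i))) (igen (z3 n))
               else gen (x3 k)
     | y3 k => gen (y3 (swp i k))
     | z3 => gen (z3 n)
     end
  end.

(* Under theta a word w of FVB_n sends y_k to y_(tau k) and x_k to x_(pi k) V, where the
   permutations pi = xperm w, tau = yperm w and the word V = ytail w k in the y's are computed
   letter by letter: sigma_i and rho_i both swap the indices i, i+1 of the x's, only rho_i swaps
   those of the y's, and sigma_i contributes y_(i+1)^(+-1). The same data describe the other
   representations: w sends x_k to x_(pi k) V^m under theta_(1,m), to x_(pi k) V^z under theta_2,
   to x_(pi k) z^E V under theta_3 and to (x_(pi k))^(z^E) V under theta_4, because in K the
   powers of z commute with the y's; the exponent E = pi k - k - |V| telescopes, |V| being the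
   exponent sum of V. Projecting onto the free groups on the x's and on the y's, each of these
   automorphisms is trivial iff pi = tau = id and V is freely trivial (for V^m, m <> 0, because
   y |-> y^m maps reduced words to reduced words). For (1), every generator
   is an involution and every defining relator of FVB_n involves at most four indices: its data
   are the image, under an embedding of indices, of those of a relator of FVB_2, FVB_3 or FVB_4,
   which are trivial by direct computation. *)

From Pilot Require Import Defs.
From mathcomp Require Import all_boot all_algebra zify.
Set Implicit Arguments. Unset Strict Implicit. Unset Printing Implicit Defensive.
Import GRing.Theory.

Section Words.
Variable A : Type.
Implicit Types (u v : word A) (a : letter A).

Lemma inv_letterK : involutive (@inv_letter A).
Proof. by case=> x b; rewrite /inv_letter negbK. Qed.

Lemma winv_cat u v : winv (u ++ v) = winv v ++ winv u.
Proof. by rewrite /winv map_cat rev_cat. Qed.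

Lemma winv_cons a u : winv (a :: u) = winv u ++ [:: inv_letter a].
Proof. by rewrite /winv /= rev_cons cats1. Qed.

Lemma winvK : involutive (@winv A).
Proof. by move=> u; rewrite /winv map_rev revK -map_comp (eq_map inv_letterK) map_id. Qed.

Lemma flatten_nseq_catC c u : flatten (nseq c u) ++ u = u ++ flatten (nseq c u).
Proof. by elim: c => [|c IH] /=; rewrite ?cats0 // -catA IH. Qed.

Lemma winv_flatten_nseq c u : winv (flatten (nseq c u)) = flatten (nseq c (winv u)).
Proof. by elim: c => [//|c IH]; rewrite [LHS]/= winv_cat IH flatten_nseq_catC. Qed.

Lemma wpow_opp u m : wpow u (- m)%R = winv (wpow u m).
Proof.
case: m => [[|c]|c] //=.
- by rewrite (winv_flatten_nseq c.+1 u).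
- by rewrite -[winv u ++ _]/(flatten (nseq c.+1 (winv u))) -winv_flatten_nseq winvK.
Qed.

End Words.

Section Substitution.
Variables A B : Type.
Implicit Types (u v : word A) (f g : A -> word B).

Lemma wsubst_cat f u v : wsubst f (u ++ v) = wsubst f u ++ wsubst f v.
Proof. by rewrite /wsubst map_cat flatten_cat. Qed.

Lemma wsubst_cons f a u :
  wsubst f (a :: u) = (if a.2 then winv (f a.1) else f a.1) ++ wsubst f u.
Proof. by []. Qed.

Lemma wsubst_gen f x : wsubst f (gen x) = f x.
Proof. exact: cats0. Qed.

Lemma wsubst_igen f x : wsubst f (igen x) = winv (f x).
Proof. exact: cats0. Qed.

Lemma wsubst_winv f u : wsubst f (winv u) = winv (wsubst f u).
Proof.
elim: u => [//|a u IH].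
rewrite winv_cons wsubst_cat IH wsubst_cons winv_cat; congr (_ ++ _).
by case: a => x []; rewrite /inv_letter /= cats0 ?winvK.
Qed.

Lemma eq_wsubst f g u : f =1 g -> wsubst f u = wsubst g u.
Proof. by move=> fg; rewrite /wsubst; congr flatten; apply: eq_map => l; rewrite fg. Qed.

Lemma wsubst_wpow f u m : wsubst f (wpow u m) = wpow (wsubst f u) m.
Proof.
have wsubst_flatten c v : wsubst f (flatten (nseq c v)) = flatten (nseq c (wsubst f v)).
  by elim: c => [//|c IH]; rewrite /= wsubst_cat IH.
by case: m => c; rewrite /wpow wsubst_flatten ?wsubst_winv.
Qed.

Lemma wsubst0 u : wsubst (fun _ => [::] : word B) u = [::].
Proof. by elim: u => [//|[x []] u IH]. Qed.

Lemma wpow_nil m : wpow ([::] : word B) m = [::].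
Proof. by case: m => c; elim: c. Qed.

End Substitution.

Lemma wsubst_id (A : Type) (u : word A) : wsubst (@gen A) u = u.
Proof. by elim: u => [//|[x []] u IH]; rewrite wsubst_cons IH. Qed.

Lemma wsubst_comp (A B C : Type) (f : A -> word B) (g : B -> word C) u :
  wsubst g (wsubst f u) = wsubst (fun x => wsubst g (f x)) u.
Proof.
elim: u => [//|[x b] u IH]; rewrite !wsubst_cons wsubst_cat IH.
by case: b; rewrite ?wsubst_winv.
Qed.

Lemma wsubst_comp_nil (A B C : Type) (f : A -> word B) (g : B -> word C) u :
  (forall a, wsubst g (f a) = [::]) -> wsubst g (wsubst f u) = [::].
Proof. by move=> gf; rewrite wsubst_comp (eq_wsubst _ gf) wsubst0. Qed.

Lemma wsubst_comp_id (A B : Type) (f : A -> word B) (g : B -> word A) u :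
  (forall a, wsubst g (f a) = gen a) -> wsubst g (wsubst f u) = u.
Proof. by move=> gf; rewrite wsubst_comp (eq_wsubst _ gf) wsubst_id. Qed.

Definition rename (A B : Type) (f : A -> B) (u : word A) : word B :=
  wsubst (fun a => gen (f a)) u.

Lemma wsubst_rename (A B C : Type) (f : A -> B) (h : B -> word C) u :
  wsubst h (rename f u) = wsubst (fun a => h (f a)) u.
Proof. by rewrite wsubst_comp; apply: eq_wsubst => a; rewrite wsubst_gen. Qed.

Section Congruence.
Variables (A : Type) (R : word A -> Prop).
Implicit Types (u v p s : word A) (a : letter A).
Notation peq := (peq R).

Lemma peq_ctx p s u v : peq u v -> peq (p ++ u ++ s) (p ++ v ++ s).
Proof.
elim=> {u v} [w|u v _|u v w _ IHuv _ IHvw|u a v|u r v Rr].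
- exact: peq_refl.
- exact: peq_sym.
- exact: peq_trans IHvw.
- by rewrite -!catA /= catA [p ++ (u ++ v ++ s)]catA; apply: peq_cancel.
- by rewrite -!catA catA [p ++ (u ++ v ++ s)]catA; apply: peq_rel.
Qed.

Lemma peq_cat u u' v v' : peq u u' -> peq v v' -> peq (u ++ v) (u' ++ v').
Proof.
move=> uu' vv'; apply: (@peq_trans _ _ _ (u' ++ v)).
  by have := peq_ctx [::] v uu'.
by have := peq_ctx u' [::] vv'; rewrite !cats0.
Qed.

Lemma peq_catl p u v : peq u v -> peq (p ++ u) (p ++ v).
Proof. exact/peq_cat/peq_refl. Qed.

Lemma peq_catr s u v : peq u v -> peq (u ++ s) (v ++ s).
Proof. by move=> uv; apply: peq_cat uv (peq_refl _ _). Qed.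

Lemma peq_winv_r u : peq (u ++ winv u) [::].
Proof.
elim: u => [|a u IH]; first exact: peq_refl.
rewrite winv_cons /= catA; apply: (@peq_trans _ _ _ [:: a; inv_letter a]).
  by have := peq_ctx [:: a] [:: inv_letter a] IH.
exact: (@peq_cancel _ R [::] a [::]).
Qed.

Lemma peq_winv_l u : peq (winv u ++ u) [::].
Proof. by have := peq_winv_r (winv u); rewrite winvK. Qed.

Lemma peq_rel0 r : R r -> peq r [::].
Proof. by move=> Rr; have := @peq_rel _ R [::] r [::] Rr; rewrite cats0. Qed.

Lemma peq_winv u v : peq u v -> peq (winv u) (winv v).
Proof.
elim=> {u v} [w|u v _|u v w _ IHuv _ IHvw|u a v|u r v Rr].
- exact: peq_refl.
- exact: peq_sym.
- exact: peq_trans IHvw.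
- by rewrite !winv_cat !winv_cons /= -!catA /= inv_letterK; apply: peq_cancel.
- rewrite !winv_cat -catA; apply: peq_catl; apply: (@peq_catr (winv u) _ [::]).
  apply: (@peq_trans _ _ _ (winv r ++ r)); last exact: peq_winv_l.
  by have := peq_catl (winv r) (peq_sym (peq_rel0 Rr)); rewrite cats0.
Qed.

Lemma wpow_add1 u e : peq (u ++ wpow u e) (wpow u (1 + e)%R).
Proof.
case: e => [c|[|c]]; first exact: peq_refl.
  by rewrite /= cats0; apply: peq_winv_r.
have -> : (1 + Negz c.+1)%R = Negz c by rewrite !NegzE; lia.
by rewrite /= catA; apply: peq_catr (peq_winv_r u).
Qed.

Lemma wpow_addN1 u e : peq (winv u ++ wpow u e) (wpow u (-1 + e)%R).
Proof.
case: e => [[|c]|c]; last exact: peq_refl.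
  by rewrite /= cats0; apply: peq_refl.
have -> : (-1 + Posz c.+1)%R = Posz c by lia.
by rewrite /= catA; apply: peq_catr (peq_winv_l u).
Qed.

Lemma wpow_add u d e : peq (wpow u d ++ wpow u e) (wpow u (d + e)%R).
Proof.
case: d => c; elim: c => [|c IH].
- by rewrite add0r; apply: peq_refl.
- rewrite -[wpow u _]/(u ++ wpow u c) -catA; apply: peq_trans (peq_catl u IH) _.
  have -> : (Posz c.+1 + e = 1 + (Posz c + e))%R by lia.
  exact: wpow_add1.
- by rewrite /= cats0; apply: wpow_addN1.
- rewrite -[wpow u _]/(winv u ++ wpow u (Negz c)) -catA.
  apply: peq_trans (peq_catl _ IH) _.
  have -> : (Negz c.+1 + e = -1 + (Negz c + e))%R by rewrite !NegzE; lia.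
  exact: wpow_addN1.
Qed.

Definition comm u v := peq (u ++ v) (v ++ u).

Lemma comm_sym u v : comm u v -> comm v u.
Proof. exact: peq_sym. Qed.

Lemma comm_cat u v1 v2 : comm u v1 -> comm u v2 -> comm u (v1 ++ v2).
Proof.
move=> uv1 uv2; apply: (@peq_trans _ _ _ (v1 ++ u ++ v2)).
  by have := peq_catr v2 uv1; rewrite -!catA.
by have := peq_catl v1 uv2; rewrite -!catA.
Qed.

Lemma comm_winv u v : comm u v -> comm u (winv v).
Proof.
move=> uv; apply: (@peq_trans _ _ _ (winv v ++ v ++ u ++ winv v)).
  by have := peq_catr (u ++ winv v) (peq_sym (peq_winv_l v)); rewrite -!catA.
apply: peq_catl; apply: (@peq_trans _ _ _ (u ++ v ++ winv v)).
  by have := peq_catr (winv v) (peq_sym uv); rewrite -!catA.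
by have := peq_catl u (peq_winv_r v); rewrite cats0.
Qed.

Lemma comm_wpow u v m : comm u v -> comm u (wpow v m).
Proof.
move=> uv; have comm_flatten c w : comm u w -> comm u (flatten (nseq c w)).
  by move=> uw; elim: c => [|c IH]; [rewrite /comm cats0; apply: peq_refl|apply: comm_cat].
by case: m => c; apply: comm_flatten => //; apply: comm_winv.
Qed.

Lemma comm_of_commutator_rel u v : R (winv u ++ winv v ++ u ++ v) -> comm v u.
Proof.
move=> Ruv.
have insert_rel : peq (v ++ u) ((v ++ u) ++ winv u ++ winv v ++ u ++ v).
  by have := peq_sym (@peq_rel _ R (v ++ u) _ [::] Ruv); rewrite !cats0.
have cancel_u := peq_ctx v (winv v ++ u ++ v) (peq_winv_r u).
have cancel_v := peq_ctx [::] (u ++ v) (peq_winv_r v).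
rewrite -!catA /= in insert_rel cancel_u cancel_v.
exact: peq_trans insert_rel (peq_trans cancel_u cancel_v).
Qed.

End Congruence.

Definition is_hom_to (A B : Type) (R : word A -> Prop) (R' : word B -> Prop)
  (f : A -> word B) := forall r, R r -> peq R' (wsubst f r) [::].

Section Homomorphisms.
Variables (A B : Type) (R : word A -> Prop) (R' : word B -> Prop).

Lemma wsubst_peq (f : A -> word B) u v :
  is_hom_to R R' f -> peq R u v -> peq R' (wsubst f u) (wsubst f v).
Proof.
move=> f_hom; elim=> {u v} [w|u v _|u v w _ IHuv _ IHvw|u a v|u r v Rr].
- exact: peq_refl.
- exact: peq_sym.
- exact: peq_trans IHvw.
- rewrite !wsubst_cat; apply: peq_catl.
  rewrite !wsubst_cons catA; apply: (@peq_catr _ _ _ _ [::]).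
  by case: a => x [] /=; [apply: peq_winv_l | apply: peq_winv_r].
- rewrite !wsubst_cat; apply: peq_catl.
  by apply: (@peq_catr _ _ _ _ [::]); apply: f_hom.
Qed.

Lemma wsubst_peq_pointwise (f g : A -> word B) u :
  (forall x, peq R' (f x) (g x)) -> peq R' (wsubst f u) (wsubst g u).
Proof.
move=> fg; elim: u => [|[x b] u IH]; first exact: peq_refl.
by rewrite !wsubst_cons; apply: peq_cat => //; case: b; [apply: peq_winv|]; apply: fg.
Qed.

Lemma norels_hom_to (f : B -> word A) : is_hom_to norels R f.
Proof. by []. Qed.

End Homomorphisms.

Lemma is_hom_to_comp (A B C : Type) (R : word A -> Prop) (R' : word B -> Prop)
    (R'' : word C -> Prop) f g :
  is_hom_to R R' f -> is_hom_to R' R'' g -> is_hom_to R R'' (fun x => wsubst g (f x)).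
Proof. by move=> f_hom g_hom r Rr; rewrite -wsubst_comp; apply: wsubst_peq g_hom (f_hom r Rr). Qed.

Definition acts_trivially (Y X : Type) (R : word X -> Prop)
  (Phi : letter Y -> X -> word X) (q : word Y) := forall x, peq R (act Phi q x) (gen x).

(* Every generator of FVB_n is an involution, so the letter a^-1 may act as a. *)
Definition letter_act (Y X : Type) (phi : Y -> X -> word X) (l : letter Y) := phi l.1.

Section Action.
Variables (Y X : Type) (R : word X -> Prop).
Implicit Types (Phi Psi : letter Y -> X -> word X) (q : word Y).

Lemma foldl_act Phi q u :
  foldl (fun w l => wsubst (Phi l) w) u q = wsubst (act Phi q) u.
Proof.
elim: q u => [|l q IH] u /=; first by rewrite wsubst_id.
rewrite IH wsubst_comp; apply: eq_wsubst => x.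
by rewrite /act /= IH wsubst_gen.
Qed.

Lemma act_cons Phi l q x : act Phi (l :: q) x = wsubst (act Phi q) (Phi l x).
Proof. by rewrite /act /= foldl_act wsubst_gen. Qed.

Lemma act_hom Phi q : (forall l, is_hom R (Phi l)) -> is_hom R (act Phi q).
Proof.
move=> Phi_hom; elim: q => [|l q IH] r Rr.
  by rewrite (eq_wsubst _ (fun x => cats0 (gen x))) wsubst_id; apply: peq_rel0.
rewrite (eq_wsubst _ (act_cons Phi l q)); exact: is_hom_to_comp (Phi_hom l) IH r Rr.
Qed.

Lemma act_peq_pointwise Phi Psi : (forall l, is_hom R (Phi l)) ->
  (forall l x, peq R (Phi l x) (Psi l x)) ->
  forall q x, peq R (act Phi q x) (act Psi q x).
Proof.
move=> Phi_hom PhiPsi; elim=> [|l q IH] x; first exact: peq_refl.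
rewrite !act_cons; apply: peq_trans (wsubst_peq_pointwise _ IH).
exact: wsubst_peq (act_hom q Phi_hom) (PhiPsi l x).
Qed.

Lemma act_fixed Phi q x : (forall l, Phi l x = gen x) -> act Phi q x = gen x.
Proof. by move=> Phi_x; elim: q => [//|l q IH]; rewrite act_cons Phi_x wsubst_gen. Qed.

End Action.

Section Witness.
Variables (Y X : Type) (Q : word Y -> Prop) (R : word X -> Prop).
Variable phi : Y -> X -> word X.

Lemma rep_witness_unique Psi : rep_witness Q R phi Psi ->
  (forall y x, peq R (wsubst (phi y) (phi y x)) (gen x)) ->
  forall l x, peq R (Psi l x) (letter_act phi l x).
Proof.
case=> Psi_phi Psi_hom Psi_inv _ phi_inv [y []] x; last by rewrite Psi_phi; apply: peq_refl.
apply: (@peq_trans _ _ _ (wsubst (Psi (y, true)) (wsubst (phi y) (phi y x)))).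
  by rewrite -[X in peq _ X _]wsubst_gen; apply: wsubst_peq (Psi_hom _) (peq_sym (phi_inv y x)).
rewrite wsubst_comp -[X in peq _ _ X]wsubst_id; apply: wsubst_peq_pointwise => a.
by have := Psi_inv (y, false) a; rewrite Psi_phi.
Qed.

Lemma in_kerE w : rep_witness Q R phi (letter_act phi) ->
  in_ker Q R phi w <-> acts_trivially R (letter_act phi) w.
Proof.
move=> phi_rep; split=> [|w_triv Psi Psi_rep x]; first exact.
apply: peq_trans (w_triv x); apply: act_peq_pointwise; first by case: Psi_rep.
apply: rep_witness_unique Psi_rep _ => y.
by case: phi_rep => _ _ phi_inv _; apply: (phi_inv (y, false)).
Qed.

Lemma rep_witness_of_relators : (forall y, Q (gen y ++ gen y)) ->
  (forall l, is_hom R (letter_act phi l)) ->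
  (forall q, Q q -> acts_trivially R (letter_act phi) q) ->
  rep_witness Q R phi (letter_act phi).
Proof.
move=> Q_sq phi_hom Q_triv; split=> // -[y b] x.
have act_y : act (letter_act phi) (gen y) =1 phi y by move=> a; rewrite act_cons -foldl_act.
by have := Q_triv _ (Q_sq y) x; rewrite act_cons (eq_wsubst _ act_y).
Qed.

End Witness.

Section FreeReduction.
Variable A : eqType.
Implicit Types (u v s : word A) (a b : letter A).

Definition push a s : word A :=
  if s is b :: s' then (if b == inv_letter a then s' else a :: s) else [:: a].

Definition red u := foldr push [::] u.

Fixpoint reduced s : bool :=
  if s is a :: s' then
    (if s' is b :: _ then b != inv_letter a else true) && reduced s'
  else true.

Lemma reduced_behead a s : reduced (a :: s) -> reduced s.
Proof. by case/andP. Qed.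

Lemma reduced_red u : reduced (red u).
Proof.
elim: u => [//|a u] /=; case: (red u) => [//|b s] /= red_bs.
by case: ifP => [_|b_a]; [apply: reduced_behead red_bs|rewrite /= b_a].
Qed.

Lemma push_inv a s : reduced s -> push (inv_letter a) (push a s) = s.
Proof.
case: s => [|b s] /=; first by rewrite inv_letterK eqxx.
case: ifP => [/eqP ->|_ _]; last by rewrite /= inv_letterK eqxx.
case: s => [//|c s] /= /andP[c_inv _].
by rewrite inv_letterK in c_inv *; rewrite (negbTE c_inv).
Qed.

Lemma peq_red u v : peq norels u v -> red u = red v.
Proof.
elim=> {u v} // [u v w _ -> _ ->|u a v] //.
by rewrite /red !foldr_cat /= -{1}(inv_letterK a) push_inv // reduced_red.
Qed.

Lemma peq_red_r (R : word A -> Prop) u : peq R u (red u).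
Proof.
elim: u => [|a u IH]; first exact: peq_refl.
apply: (@peq_trans _ _ _ (a :: red u)); first exact: peq_catl [:: a] _ _ IH.
rewrite /= /push; case: (red u) => [|b s]; first exact: peq_refl.
by case: eqP => [->|_]; [apply: (@peq_cancel _ R [::] a s)|apply: peq_refl].
Qed.

Lemma red_id s : reduced s -> red s = s.
Proof.
elim: s => [//|a s IH] red_as /=; rewrite IH; last exact: reduced_behead red_as.
by case: s red_as {IH} => [//|b s] /= /andP[/negbTE ->].
Qed.

Lemma gen_inj (x y : A) : peq norels (gen x) (gen y) -> x = y.
Proof. by move/peq_red; rewrite /red /= => -[]. Qed.

Definition power_subst (m : int) u : word A := wsubst (fun x => wpow (gen x) m) u.

Lemma power_subst_nseq m : m != 0%R -> exists c (flip : bool), 0 < c /\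
  forall u, power_subst m u = flatten (map (fun a => nseq c (a.1, a.2 (+) flip)) u).
Proof.
have flatten_nseq1 c a : flatten (nseq c [:: a]) = nseq c a.
  by elim: c => [//|c IH] /=; rewrite IH.
have winv_nseq c a : winv (nseq c a) = nseq c (inv_letter a).
  by rewrite /winv map_nseq rev_nseq.
case: m => [[|c]|c] // _; [exists c.+1, false|exists c.+1, true]; split=> // u;
  congr flatten; apply: eq_map => -[x []] /=;
  by rewrite flatten_nseq1 ?(winv_nseq c.+1).
Qed.

(* Adjacent blocks cannot cancel, since adjacent letters of u do not. *)
Lemma reduced_power_subst m u : m != 0%R -> reduced u -> reduced (power_subst m u).
Proof.
move=> /power_subst_nseq[c [flip [c_gt0 ->]]].
set blow := fun a : letter A => nseq c (a.1, a.2 (+) flip).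
have reduced_nseq_cat a t : reduced t ->
    (if t is b :: _ then b != inv_letter a else true) -> reduced (nseq c a ++ t).
  move=> red_t t_a; elim: (c) => [//|k IH] /=; rewrite IH andbT.
  by case: k {IH} => [|k] //=; case: a {t_a} => x b; rewrite /inv_letter xpair_eqE eqxx; case: b.
case: u => [//|a u]; elim: u a => [|b u IH] a /=.
  by rewrite cats0 -[blow a]cats0 => _; apply: reduced_nseq_cat.
case/andP=> b_a red_bu; apply: reduced_nseq_cat; first exact: IH.
rewrite /blow; case: (c) c_gt0 => [//|k] _ /=; apply: contra b_a.
clear IH red_bu blow; case: a b => x e [y f].
by rewrite /inv_letter !xpair_eqE /=; case: flip; case: e; case: f.
Qed.

Lemma power_subst_inj m u : m != 0%R ->
  peq norels (power_subst m u) [::] -> peq norels u [::].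
Proof.
move=> m0 mu0; have red_u := peq_red_r norels u.
have : red (power_subst m (red u)) = red [::].
  apply: peq_red; apply: peq_trans mu0; apply: peq_sym.
  exact: wsubst_peq (norels_hom_to _ _) red_u.
rewrite red_id; last exact: reduced_power_subst (reduced_red u).
have [c [flip [c_gt0 ->]]] := power_subst_nseq m0.
case: (red u) red_u => [//|a v] _.
by case: c c_gt0.
Qed.

End FreeReduction.

Definition esum (A : Type) (u : word A) : int :=
  foldr (fun l s => (if l.2 then -1 else 1) + s)%R 0%R u.

Lemma esum_cat (A : Type) (u v : word A) : esum (u ++ v) = (esum u + esum v)%R.
Proof. by elim: u => [|a u IH] /=; rewrite ?add0r // IH addrA. Qed.

Lemma esum_rename (A B : Type) (f : A -> B) (u : word A) : esum (rename f u) = esum u.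
Proof.
by elim: u => [//|[x []] u IH]; rewrite /rename wsubst_cons -/(rename f u) esum_cat IH /= addr0.
Qed.

Lemma esum_peq (A : Type) (u v : word A) : peq norels u v -> esum u = esum v.
Proof.
elim=> {u v} // [u v w _ -> _ ->|u [x b] v] //.
rewrite !esum_cat; congr (_ + _)%R.
by rewrite /= addrA; case: b; rewrite /= ?addNr ?addrN ?add0r.
Qed.

Section Tracks.
Variable n : nat.
Implicit Types (a : fvb_gen n) (w : word (fvb_gen n)) (k : 'I_n).

Definition gen_index a : 'I_n.-1 := match a with Sig i | Rho i => i end.

Definition xswap a k := swp (gen_index a) k.

Definition yswap a k := if a is Rho i then swp i k else k.

Definition ystep a k : word 'I_n :=
  if a is Sig i then
    if k == lo i then gen (hi i) else if k == hi i then igen (hi i) else [::]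
  else [::].

Definition zstep a k : int :=
  if a is Rho i then
    if k == lo i then 1%R else if k == hi i then (-1)%R else 0%R
  else 0%R.

Fixpoint xperm w k := if w is l :: w' then xperm w' (xswap l.1 k) else k.

Fixpoint yperm w k := if w is l :: w' then yperm w' (yswap l.1 k) else k.

Fixpoint ytail w k : word 'I_n :=
  if w is l :: w' then ytail w' (xswap l.1 k) ++ rename (yperm w') (ystep l.1 k)
  else [::].

Fixpoint zexp w k : int :=
  if w is l :: w' then (zstep l.1 k + zexp w' (xswap l.1 k))%R else 0%R.

Definition trivial_track w :=
  forall k, [/\ xperm w k = k, yperm w k = k & peq norels (ytail w k) [::]].

Lemma zstep_formula a k :
  zstep a k = (Posz (xswap a k) - Posz k - esum (ystep a k))%R.
Proof.
by case: a => i; rewrite /zstep /xswap /swp /ystep /=;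
  do ?[case: eqP => [->|_] /=]; lia.
Qed.

Lemma zexp_formula w k :
  zexp w k = (Posz (xperm w k) - Posz k - esum (ytail w k))%R.
Proof.
elim: w k => [|l w IH] k /=; first lia.
by rewrite IH zstep_formula esum_cat esum_rename; lia.
Qed.

Lemma zexp_trivial w k : trivial_track w -> zexp w k = 0%R.
Proof. by case/(_ k) => xk _ /esum_peq tail0; rewrite zexp_formula xk tail0 /=; lia. Qed.

Section Tracking.
Variables (X : Type) (Phi : letter (fvb_gen n) -> X -> word X) (x y : 'I_n -> X).
Hypothesis Phi_y : forall l k, Phi l (y k) = gen (y (yswap l.1 k)).

Lemma act_y w k : act Phi w (y k) = gen (y (yperm w k)).
Proof. by elim: w k => [//|l w IH] k; rewrite act_cons Phi_y wsubst_gen IH. Qed.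

Lemma act_x_subst (h : 'I_n -> word X) :
  (forall l k, Phi l (x k) = gen (x (xswap l.1 k)) ++ wsubst h (ystep l.1 k)) ->
  (forall w i, wsubst (act Phi w) (h i) = h (yperm w i)) ->
  forall w k, act Phi w (x k) = gen (x (xperm w k)) ++ wsubst h (ytail w k).
Proof.
move=> Phi_x act_h; elim=> [//|l w IH] k.
rewrite act_cons Phi_x wsubst_cat wsubst_gen IH wsubst_comp (eq_wsubst _ (act_h w)).
by rewrite /= wsubst_cat wsubst_rename.
Qed.

Variables (R : word X -> Prop) (P T : word (fvb_gen n) -> 'I_n -> word X).
Hypothesis act_x :
  forall w k, peq R (act Phi w (x k)) (P w k ++ gen (x (xperm w k)) ++ T w k).
Hypothesis Phi_gens :
  forall g, [\/ exists k, g = x k, exists k, g = y k | forall l, Phi l g = gen g].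

Lemma acts_trivially_of_track w : trivial_track w ->
  (forall k, peq R (P w k) [::] /\ peq R (T w k) [::]) -> acts_trivially R Phi w.
Proof.
move=> w_triv PT g; case: (Phi_gens g) => [[k ->]|[k ->]|g_fixed].
- have [xk _ _] := w_triv k; have [P0 T0] := PT k.
  apply: peq_trans (act_x w k) _; rewrite xk.
  by have := peq_cat P0 (peq_catl (gen (x k)) T0); rewrite cats0.
- by have [_ yk _] := w_triv k; rewrite act_y yk; apply: peq_refl.
- by rewrite act_fixed //; apply: peq_refl.
Qed.

Variables (xproj yproj : X -> word 'I_n).
Hypotheses (xproj_hom : is_hom_to R norels xproj) (yproj_hom : is_hom_to R norels yproj).
Hypotheses (xproj_x : forall k, xproj (x k) = gen k) (yproj_y : forall k, yproj (y k) = gen k).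
Hypothesis yproj_x : forall k, yproj (x k) = [::].

Lemma track_of_acts_trivially w :
  (forall k, wsubst xproj (P w k) = [::] /\ wsubst xproj (T w k) = [::]) ->
  (forall k, peq norels (wsubst yproj (P w k ++ T w k)) [::] -> peq norels (ytail w k) [::]) ->
  acts_trivially R Phi w -> trivial_track w.
Proof.
move=> xproj_PT yproj_PT w_triv k.
have hx := peq_trans (peq_sym (act_x w k)) (w_triv (x k)).
have hy := w_triv (y k); rewrite act_y in hy.
have [xP xT] := xproj_PT k; split.
- apply: gen_inj; have := wsubst_peq xproj_hom hx.
  by rewrite !wsubst_cat !wsubst_gen xP xT !xproj_x cats0.
- by apply: gen_inj; have := wsubst_peq yproj_hom hy; rewrite !wsubst_gen !yproj_y.
- apply: yproj_PT; have := wsubst_peq yproj_hom hx.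
  by rewrite !wsubst_cat !wsubst_gen !yproj_x.
Qed.

End Tracking.
End Tracks.

Section Representations.
Variable n : nat.
Implicit Types (w : word (fvb_gen n)) (k : 'I_n) (V : word 'I_n).
Notation K := (@K_rel n).

Definition xproj2 (g : gen2 n) : word 'I_n := if g is x2 k then gen k else [::].
Definition yproj2 (g : gen2 n) : word 'I_n := if g is y2 k then gen k else [::].
Definition xproj3 (g : gen3 n) : word 'I_n := if g is x3 k then gen k else [::].
Definition yproj3 (g : gen3 n) : word 'I_n := if g is y3 k then gen k else [::].

Lemma xproj3_hom : is_hom_to K norels xproj3.
Proof. by move=> _ [i]; apply: peq_refl. Qed.

Lemma yproj3_hom : is_hom_to K norels yproj3.
Proof. by move=> _ [i]; apply: (@peq_cancel _ norels [::] (i, true) [::]). Qed.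

Lemma gen2_cases (Phi : letter (fvb_gen n) -> gen2 n -> word (gen2 n)) g :
  [\/ exists k, g = x2 k, exists k, g = y2 k | forall l, Phi l g = gen g].
Proof. by case: g => k; [apply: Or31 | apply: Or32]; exists k. Qed.

Lemma gen3_cases (Phi : letter (fvb_gen n) -> gen3 n -> word (gen3 n)) :
  (forall l, Phi l (z3 n) = gen (z3 n)) ->
  forall g, [\/ exists k, g = x3 k, exists k, g = y3 k | forall l, Phi l g = gen g].
Proof.
by move=> Phi_z [k|k|]; [apply: Or31; exists k | apply: Or32; exists k | apply: Or33].
Qed.

Lemma theta_x a k :
  theta a (x2 k) = gen (x2 (xswap a k)) ++ wsubst (fun i => gen (y2 i)) (ystep a k).
Proof.
by case: a => i //; rewrite /= /xswap /swp; case: (k == lo i) => //; case: (k == hi i).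
Qed.

Lemma theta_y l k : letter_act (@theta n) l (y2 k) = gen (y2 (yswap l.1 k)).
Proof. by case: l => -[]. Qed.

Lemma act_theta_x w k : peq norels (act (letter_act (@theta n)) w (x2 k))
  ([::] ++ gen (x2 (xperm w k)) ++ wsubst (fun i => gen (y2 i)) (ytail w k)).
Proof.
rewrite (act_x_subst (fun l => theta_x l.1)) => [|w' i]; first exact: peq_refl.
by rewrite wsubst_gen (act_y theta_y).
Qed.

Lemma theta_acts_trivially w :
  acts_trivially norels (letter_act (@theta n)) w <-> trivial_track w.
Proof.
split.
- apply: (track_of_acts_trivially (xproj := xproj2) (yproj := yproj2) theta_y act_theta_x)
    => // k; first by rewrite wsubst_comp_nil.
  by rewrite /= wsubst_comp_id.
- move=> w_triv; apply: (acts_trivially_of_track theta_y act_theta_x (gen2_cases _) w_triv).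
  move=> k; have [_ _ tail0] := w_triv k; split; first exact: peq_refl.
  exact: wsubst_peq (norels_hom_to _ _) tail0.
Qed.

Lemma theta1_x m a k : theta1 m a (x2 k) =
  gen (x2 (xswap a k)) ++ wsubst (fun i => wpow (gen (y2 i)) m) (ystep a k).
Proof.
case: a => i //; rewrite /= /xswap /swp; case: (k == lo i); first by rewrite wsubst_gen.
by case: (k == hi i) => //; rewrite wsubst_igen wpow_opp.
Qed.

Lemma theta1_y m l k : letter_act (theta1 m) l (y2 k) = gen (y2 (yswap l.1 k)).
Proof. by case: l => -[]. Qed.

Lemma act_theta1_x m w k : peq norels (act (letter_act (theta1 m)) w (x2 k))
  ([::] ++ gen (x2 (xperm w k)) ++ wsubst (fun i => wpow (gen (y2 i)) m) (ytail w k)).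
Proof.
rewrite (act_x_subst (fun l => theta1_x m l.1)) => [|w' i]; first exact: peq_refl.
by rewrite wsubst_wpow wsubst_gen (act_y (theta1_y m)).
Qed.

Lemma theta1_trivial_of_track m w :
  trivial_track w -> acts_trivially norels (letter_act (theta1 m)) w.
Proof.
move=> w_triv.
apply: (acts_trivially_of_track (theta1_y m) (act_theta1_x m) (gen2_cases _) w_triv) => k.
have [_ _ tail0] := w_triv k; split; first exact: peq_refl.
exact: wsubst_peq (norels_hom_to _ _) tail0.
Qed.

Lemma theta1_acts_trivially m w : m != 0%R ->
  acts_trivially norels (letter_act (theta1 m)) w <-> trivial_track w.
Proof.
move=> m0; split; last exact: theta1_trivial_of_track.
apply: (track_of_acts_trivially (xproj := xproj2) (yproj := yproj2)
  (theta1_y m) (act_theta1_x m)) => // k.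
  by rewrite wsubst_comp_nil // => i; rewrite wsubst_wpow wpow_nil.
rewrite /= wsubst_comp (eq_wsubst _ (fun i => wsubst_wpow _ _ _)).
exact: power_subst_inj.
Qed.

Lemma theta2_x a k : theta2 a (x3 k) =
  gen (x3 (xswap a k)) ++ wsubst (fun i => wconj (gen (y3 i)) (gen (z3 n))) (ystep a k).
Proof.
by case: a => i //; rewrite /= /xswap /swp; case: (k == lo i) => //; case: (k == hi i).
Qed.

Lemma theta2_y l k : letter_act (@theta2 n) l (y3 k) = gen (y3 (yswap l.1 k)).
Proof. by case: l => -[]. Qed.

Lemma theta2_z l : letter_act (@theta2 n) l (z3 n) = gen (z3 n).
Proof. by case: l => -[]. Qed.

Lemma act_theta2_x w k : peq norels (act (letter_act (@theta2 n)) w (x3 k))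
  ([::] ++ gen (x3 (xperm w k)) ++
   wsubst (fun i => wconj (gen (y3 i)) (gen (z3 n))) (ytail w k)).
Proof.
rewrite (act_x_subst (fun l => theta2_x l.1)) => [|w' i]; first exact: peq_refl.
rewrite /wconj !wsubst_cat wsubst_winv !wsubst_gen (act_y theta2_y).
by rewrite (act_fixed _ theta2_z).
Qed.

Lemma theta2_acts_trivially w :
  acts_trivially norels (letter_act (@theta2 n)) w <-> trivial_track w.
Proof.
split.
- apply: (track_of_acts_trivially (xproj := xproj3) (yproj := yproj3) theta2_y act_theta2_x)
    => // k; first by rewrite wsubst_comp_nil.
  by rewrite /= wsubst_comp_id.
- move=> w_triv.
  apply: (acts_trivially_of_track theta2_y act_theta2_x (gen3_cases theta2_z) w_triv) => k.
  have [_ _ tail0] := w_triv k; split; first exact: peq_refl.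
  exact: wsubst_peq (norels_hom_to _ _) tail0.
Qed.

Definition zpow (e : int) : word (gen3 n) := wpow (gen (z3 n)) e.
Definition yword V : word (gen3 n) := wsubst (fun i => gen (y3 i)) V.

Lemma comm_zpow_yword e V : comm K (zpow e) (yword V).
Proof.
apply/comm_sym/comm_wpow/comm_sym.
elim: V => [|[i b] V IH]; first by rewrite /comm cats0; apply: peq_refl.
rewrite /yword wsubst_cons; apply: comm_cat IH.
have z_y := comm_of_commutator_rel (u := gen (y3 i)) (v := gen (z3 n)) (K_comm i).
by case: b => //; apply: comm_winv.
Qed.

Lemma zpow_yword_merge e d U V :
  peq K (zpow e ++ yword U ++ zpow d ++ yword V) (zpow (e + d) ++ yword (U ++ V)).
Proof.
apply: (@peq_trans _ _ _ (zpow e ++ zpow d ++ yword U ++ yword V)).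
  apply: peq_catl; rewrite !catA; apply: peq_catr.
  exact/comm_sym/comm_zpow_yword.
by rewrite catA /yword wsubst_cat; apply: peq_catr; apply: wpow_add.
Qed.

Lemma xproj3_zpow e : wsubst xproj3 (zpow e) = [::].
Proof. by rewrite wsubst_wpow wpow_nil. Qed.

Lemma yproj3_zpow e : wsubst yproj3 (zpow e) = [::].
Proof. by rewrite wsubst_wpow wpow_nil. Qed.

Lemma xproj3_yword V : wsubst xproj3 (yword V) = [::].
Proof. exact: wsubst_comp_nil. Qed.

Lemma yproj3_yword V : wsubst yproj3 (yword V) = V.
Proof. exact: wsubst_comp_id. Qed.

Lemma theta3_x a k :
  theta3 a (x3 k) = gen (x3 (xswap a k)) ++ zpow (zstep a k) ++ yword (ystep a k).
Proof.
by case: a => i; rewrite /= /xswap /swp; case: (k == lo i) => //; case: (k == hi i).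
Qed.

Lemma theta4_x a k : theta4 a (x3 k) =
  zpow (- zstep a k) ++ gen (x3 (xswap a k)) ++ zpow (zstep a k) ++ yword (ystep a k).
Proof.
by case: a => i; rewrite /= /xswap /swp; case: (k == lo i) => //; case: (k == hi i).
Qed.

Section KRepresentation.
Variable Phi : letter (fvb_gen n) -> gen3 n -> word (gen3 n).
Hypothesis Phi_y : forall l k, Phi l (y3 k) = gen (y3 (yswap l.1 k)).
Hypothesis Phi_z : forall l, Phi l (z3 n) = gen (z3 n).

Lemma wsubst_act_zpow w e : wsubst (act Phi w) (zpow e) = zpow e.
Proof. by rewrite wsubst_wpow wsubst_gen (act_fixed _ Phi_z). Qed.

Lemma wsubst_act_yword w V : wsubst (act Phi w) (yword V) = yword (rename (yperm w) V).
Proof.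
rewrite wsubst_comp /yword wsubst_rename; apply: eq_wsubst => i.
by rewrite wsubst_gen (act_y Phi_y).
Qed.

End KRepresentation.

Lemma theta3_y l k : letter_act (@theta3 n) l (y3 k) = gen (y3 (yswap l.1 k)).
Proof. by case: l => -[]. Qed.

Lemma theta3_z l : letter_act (@theta3 n) l (z3 n) = gen (z3 n).
Proof. by case: l => -[]. Qed.

Lemma act_theta3_x w k : peq K (act (letter_act (@theta3 n)) w (x3 k))
  ([::] ++ gen (x3 (xperm w k)) ++ zpow (zexp w k) ++ yword (ytail w k)).
Proof.
elim: w k => [|l w IH] k; first exact: peq_refl.
rewrite act_cons -[letter_act _ l _]/(theta3 l.1 _) theta3_x !wsubst_cat wsubst_gen.
rewrite (wsubst_act_zpow theta3_z).
rewrite (wsubst_act_yword theta3_y) /= addrC.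
apply: peq_trans (peq_catr _ (IH _)) _; rewrite !cat0s -!catA; apply: peq_catl.
exact: zpow_yword_merge.
Qed.

Lemma theta3_acts_trivially w :
  acts_trivially K (letter_act (@theta3 n)) w <-> trivial_track w.
Proof.
split.
- apply: (track_of_acts_trivially (xproj := xproj3) (yproj := yproj3) theta3_y act_theta3_x
    xproj3_hom yproj3_hom) => // k.
    by rewrite wsubst_cat xproj3_zpow xproj3_yword.
  by rewrite /= wsubst_cat yproj3_zpow yproj3_yword.
- move=> w_triv.
  apply: (acts_trivially_of_track theta3_y act_theta3_x (gen3_cases theta3_z) w_triv).
  move=> k; have [_ _ tail0] := w_triv k; rewrite (zexp_trivial k w_triv).
  by split; [apply: peq_refl | apply: wsubst_peq (norels_hom_to _ _) tail0].
Qed.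

Lemma theta4_y l k : letter_act (@theta4 n) l (y3 k) = gen (y3 (yswap l.1 k)).
Proof. by case: l => -[]. Qed.

Lemma theta4_z l : letter_act (@theta4 n) l (z3 n) = gen (z3 n).
Proof. by case: l => -[]. Qed.

Lemma act_theta4_x w k : peq K (act (letter_act (@theta4 n)) w (x3 k))
  (zpow (- zexp w k) ++ gen (x3 (xperm w k)) ++ zpow (zexp w k) ++ yword (ytail w k)).
Proof.
elim: w k => [|l w IH] k; first exact: peq_refl.
rewrite act_cons -[letter_act _ l _]/(theta4 l.1 _) theta4_x !wsubst_cat wsubst_gen.
rewrite !(wsubst_act_zpow theta4_z) (wsubst_act_yword theta4_y) /= opprD.
apply: peq_trans (peq_catl _ (peq_catr _ (IH _))) _; rewrite -!catA catA.
apply: peq_cat; first exact: wpow_add.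
by apply: peq_catl; rewrite addrC; apply: zpow_yword_merge.
Qed.

Lemma theta4_acts_trivially w :
  acts_trivially K (letter_act (@theta4 n)) w <-> trivial_track w.
Proof.
split.
- apply: (track_of_acts_trivially (xproj := xproj3) (yproj := yproj3) theta4_y act_theta4_x
    xproj3_hom yproj3_hom) => // k.
    by rewrite xproj3_zpow wsubst_cat xproj3_zpow xproj3_yword.
  by rewrite wsubst_cat yproj3_zpow wsubst_cat yproj3_zpow yproj3_yword.
- move=> w_triv.
  apply: (acts_trivially_of_track theta4_y act_theta4_x (gen3_cases theta4_z) w_triv).
  move=> k; have [_ _ tail0] := w_triv k; rewrite (zexp_trivial k w_triv).
  by split; [apply: peq_refl | apply: wsubst_peq (norels_hom_to _ _) tail0].
Qed.

End Representations.

Section Embedding.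
Variables (n0 n : nat) (emb : 'I_n0 -> 'I_n) (emb_gen : 'I_n0.-1 -> 'I_n.-1).
Hypothesis emb_inj : injective emb.
Implicit Types (a : fvb_gen n0) (q : word (fvb_gen n0)) (k : 'I_n).

Definition map_gen a : fvb_gen n :=
  match a with Sig i => Sig (emb_gen i) | Rho i => Rho (emb_gen i) end.

Definition map_word q : word (fvb_gen n) := map (fun l => (map_gen l.1, l.2)) q.

Definition emb_compatible (i : 'I_n0.-1) :=
  emb (lo i) = lo (emb_gen i) /\ emb (hi i) = hi (emb_gen i).

Fixpoint compatible_word q : Prop :=
  if q is l :: q' then emb_compatible (gen_index l.1) /\ compatible_word q' else True.

Lemma gen_index_map a : gen_index (map_gen a) = emb_gen (gen_index a).
Proof. by case: a. Qed.

Lemma swp_emb i (k0 : 'I_n0) : emb_compatible i -> swp (emb_gen i) (emb k0) = emb (swp i k0).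
Proof.
case=> emb_lo emb_hi; rewrite /swp -emb_lo -emb_hi !(inj_eq emb_inj).
by case: (k0 == lo i) => //; case: (k0 == hi i).
Qed.

Lemma swp_out i k : emb_compatible i -> (forall k0 : 'I_n0, emb k0 != k) -> swp (emb_gen i) k = k.
Proof.
case=> emb_lo emb_hi k_out; rewrite /swp -emb_lo -emb_hi.
by rewrite eq_sym (negbTE (k_out _)) eq_sym (negbTE (k_out _)).
Qed.

Lemma xperm_emb q (k0 : 'I_n0) :
  compatible_word q -> xperm (map_word q) (emb k0) = emb (xperm q k0).
Proof.
elim: q k0 => [//|l q IH] k0 /= [l_comp q_comp].
by rewrite /xswap gen_index_map swp_emb // IH.
Qed.

Lemma yperm_emb q (k0 : 'I_n0) :
  compatible_word q -> yperm (map_word q) (emb k0) = emb (yperm q k0).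
Proof.
elim: q k0 => [//|[[i|i] b] q IH] k0 /= [l_comp q_comp]; first exact: IH.
by rewrite swp_emb // IH.
Qed.

Lemma ytail_emb q (k0 : 'I_n0) :
  compatible_word q -> ytail (map_word q) (emb k0) = rename emb (ytail q k0).
Proof.
elim: q k0 => [//|[[i|i] b] q IH] k0 /= [l_comp q_comp];
  rewrite /xswap /= swp_emb // IH // /rename wsubst_cat -/(rename _ _); congr (_ ++ _).
case: l_comp => emb_lo emb_hi; rewrite -emb_lo -emb_hi !(inj_eq emb_inj).
case: (k0 == lo i); first by rewrite !wsubst_gen yperm_emb.
by case: (k0 == hi i); rewrite ?wsubst_igen ?wsubst_gen ?yperm_emb.
Qed.

Section OutsideImage.
Variable k : 'I_n.
Hypothesis k_out : forall k0 : 'I_n0, emb k0 != k.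

Lemma xperm_out q : compatible_word q -> xperm (map_word q) k = k.
Proof. by elim: q => [//|l q IH] /= [l_comp /IH]; rewrite /xswap gen_index_map swp_out. Qed.

Lemma yperm_out q : compatible_word q -> yperm (map_word q) k = k.
Proof. by elim: q => [//|[[i|i] b] q IH] /= [l_comp /IH] //; rewrite swp_out. Qed.

Lemma ytail_out q : compatible_word q -> ytail (map_word q) k = [::].
Proof.
elim: q => [//|[[i|i] b] q IH] /= [[emb_lo emb_hi] q_comp];
  rewrite /xswap /= swp_out // IH //.
by rewrite -emb_lo -emb_hi eq_sym (negbTE (k_out _)) eq_sym (negbTE (k_out _)).
Qed.

End OutsideImage.

Lemma trivial_track_map_word q :
  compatible_word q -> trivial_track q -> trivial_track (map_word q).
Proof.
move=> q_comp q_triv k; case: (pickP (fun k0 : 'I_n0 => emb k0 == k)) => [k0 /eqP <-|k_out].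
  have [xk yk tail0] := q_triv k0.
  rewrite xperm_emb // yperm_emb // ytail_emb // xk yk; split=> //.
  exact: wsubst_peq (norels_hom_to _ _) tail0.
have {}k_out (k0 : 'I_n0) : emb k0 != k by rewrite k_out.
by rewrite xperm_out // yperm_out // ytail_out //; split=> //; apply: peq_refl.
Qed.

End Embedding.

(* Unlike [ord_enum], whose construction goes through the opaque [idP], this
   enumeration evaluates under [vm_compute]. *)
Fixpoint ord_seq n : seq 'I_n :=
  if n is m.+1 return seq 'I_n then ord0 :: map (lift ord0) (ord_seq m) else [::].

Lemma mem_ord_seq n (k : 'I_n) : k \in ord_seq n.
Proof.
elim: n k => [[]//|n IH] k /=; rewrite in_cons.
by case: (unliftP ord0 k) => [j ->|->]; rewrite ?eqxx // (mem_map (@lift_inj _ ord0)) IH orbT.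
Qed.

Definition trivial_trackb n0 (q : word (fvb_gen n0)) : bool :=
  all (fun k => [&& xperm q k == k, yperm q k == k & red (ytail q k) == [::]]) (ord_seq n0).

Lemma trivial_trackbP n0 (q : word (fvb_gen n0)) : trivial_trackb q -> trivial_track q.
Proof.
move=> /allP q_triv k; have /and3P[/eqP xk /eqP yk /eqP tail0] := q_triv k (mem_ord_seq k).
by split=> //; rewrite -tail0; exact: (peq_red_r norels).
Qed.

Lemma trivial_track_of_model n0 n (emb : 'I_n0 -> 'I_n) emb_gen q :
  injective emb -> compatible_word emb emb_gen q -> trivial_trackb q ->
  trivial_track (map_word emb_gen q).
Proof.
by move=> emb_inj q_comp /trivial_trackbP; apply: trivial_track_map_word emb_inj _ q_comp.
Qed.

Definition o0 {m} : 'I_m.+1 := ord0.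
Definition o1 {m} : 'I_m.+2 := Ordinal (isT : 1 < m.+2).
Definition o2 {m} : 'I_m.+3 := Ordinal (isT : 2 < m.+3).

Lemma sig_far_check : trivial_trackb
  (Defs.eqrel (gen (@Sig 4 o0) ++ gen (@Sig 4 o2)) (gen (@Sig 4 o2) ++ gen (@Sig 4 o0))).
Proof. by vm_compute. Qed.

Lemma rho_far_check : trivial_trackb
  (Defs.eqrel (gen (@Rho 4 o0) ++ gen (@Rho 4 o2)) (gen (@Rho 4 o2) ++ gen (@Rho 4 o0))).
Proof. by vm_compute. Qed.

Lemma sig_rho_far_check : trivial_trackb
  (Defs.eqrel (gen (@Sig 4 o0) ++ gen (@Rho 4 o2)) (gen (@Rho 4 o2) ++ gen (@Sig 4 o0))).
Proof. by vm_compute. Qed.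

Lemma sig_braid_check : trivial_trackb
  (Defs.eqrel (gen (@Sig 3 o0) ++ gen (@Sig 3 o1) ++ gen (@Sig 3 o0))
              (gen (@Sig 3 o1) ++ gen (@Sig 3 o0) ++ gen (@Sig 3 o1))).
Proof. by vm_compute. Qed.

Lemma rho_braid_check : trivial_trackb
  (Defs.eqrel (gen (@Rho 3 o0) ++ gen (@Rho 3 o1) ++ gen (@Rho 3 o0))
              (gen (@Rho 3 o1) ++ gen (@Rho 3 o0) ++ gen (@Rho 3 o1))).
Proof. by vm_compute. Qed.

Lemma mixed_braid_check : trivial_trackb
  (Defs.eqrel (gen (@Rho 3 o0) ++ gen (@Rho 3 o1) ++ gen (@Sig 3 o0))
              (gen (@Sig 3 o1) ++ gen (@Rho 3 o0) ++ gen (@Rho 3 o1))).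
Proof. by vm_compute. Qed.

Lemma rho_square_check : trivial_trackb (gen (@Rho 2 o0) ++ gen (@Rho 2 o0)).
Proof. by vm_compute. Qed.

Lemma sig_square_check : trivial_trackb (gen (@Sig 2 o0) ++ gen (@Sig 2 o0)).
Proof. by vm_compute. Qed.

Section Models.
Variables (n : nat) (i j : 'I_n.-1).

Definition emb_gen_ij {m} (a : 'I_m) : 'I_n.-1 := if val a == 0 then i else j.

Definition emb_pair (k : 'I_2) : 'I_n := if val k == 0 then lo i else hi i.

Definition emb_triple (k : 'I_3) : 'I_n :=
  if val k == 0 then lo i else if val k == 1 then hi i else hi j.

Definition emb_quad (k : 'I_4) : 'I_n :=
  if val k == 0 then lo i else if val k == 1 then hi i else if val k == 2 then lo j else hi j.

Lemma emb_pair_inj : injective emb_pair.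
Proof.
move=> k1 k2 /(congr1 val) e; apply: val_inj; move: e.
by case: k1 => [[|[|?]] ?] //; case: k2 => [[|[|?]] ?] //=; lia.
Qed.

Lemma emb_triple_inj : j = i.+1 :> nat -> injective emb_triple.
Proof.
move=> ji k1 k2 /(congr1 val) e; apply: val_inj; move: e.
by case: k1 => [[|[|[|?]]] ?] //; case: k2 => [[|[|[|?]]] ?] //=; lia.
Qed.

Lemma emb_quad_inj : far i j -> injective emb_quad.
Proof.
rewrite /far => far_ij k1 k2 /(congr1 val) e; apply: val_inj; move: e.
by case: k1 => [[|[|[|[|?]]]] ?] //; case: k2 => [[|[|[|[|?]]]] ?] //=; lia.
Qed.

End Models.

Lemma relator_trivial_track n (q : word (fvb_gen n)) : fvb_rel q -> trivial_track q.
Proof.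
case=> [i j far_ij|i j far_ij|i j far_ij|i j ji|i j ji|i j ji|i|i].
- have := trivial_track_of_model (emb_gen := emb_gen_ij i j) (emb_quad_inj far_ij) _ sig_far_check.
  by apply; do !split.
- have := trivial_track_of_model (emb_gen := emb_gen_ij i j) (emb_quad_inj far_ij) _ rho_far_check.
  by apply; do !split.
- have := trivial_track_of_model (emb_gen := emb_gen_ij i j) (emb_quad_inj far_ij) _
    sig_rho_far_check.
  by apply; do !split.
- have := trivial_track_of_model (emb_gen := emb_gen_ij i j) (emb_triple_inj ji) _ sig_braid_check.
  by apply; do !split; apply: val_inj; rewrite /= ji.
- have := trivial_track_of_model (emb_gen := emb_gen_ij i j) (emb_triple_inj ji) _ rho_braid_check.
  by apply; do !split; apply: val_inj; rewrite /= ji.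
- have := trivial_track_of_model (emb_gen := emb_gen_ij i j) (emb_triple_inj ji) _
    mixed_braid_check.
  by apply; do !split; apply: val_inj; rewrite /= ji.
- have := trivial_track_of_model (emb_gen := emb_gen_ij i i) (@emb_pair_inj n i) _ rho_square_check.
  by apply; do !split.
- have := trivial_track_of_model (emb_gen := emb_gen_ij i i) (@emb_pair_inj n i) _ sig_square_check.
  by apply; do !split.
Qed.

Section Witnesses.
Variable n : nat.

Lemma fvb_rel_square (a : fvb_gen n) : fvb_rel (gen a ++ gen a).
Proof. by case: a => i; [apply: fr_s2 | apply: fr_r2]. Qed.

Lemma K_hom (phi : gen3 n -> word (gen3 n)) (s : 'I_n -> 'I_n) :
  (forall k, phi (y3 k) = gen (y3 (s k))) -> phi (z3 n) = gen (z3 n) -> is_hom (@K_rel n) phi.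
Proof.
move=> phi_y phi_z _ [i]; rewrite !wsubst_cat !wsubst_igen !wsubst_gen phi_y phi_z.
exact: peq_rel0 (K_comm (s i)).
Qed.

Lemma theta_rep : rep_witness (@fvb_rel n) norels (@theta n) (letter_act (@theta n)).
Proof.
apply: rep_witness_of_relators fvb_rel_square _ _ => [l r []|q q_rel].
by apply/theta_acts_trivially; apply: relator_trivial_track.
Qed.

Lemma theta1_rep m : rep_witness (@fvb_rel n) norels (theta1 m) (letter_act (theta1 m)).
Proof.
apply: rep_witness_of_relators fvb_rel_square _ _ => [l r []|q q_rel].
by apply: theta1_trivial_of_track; apply: relator_trivial_track.
Qed.

Lemma theta2_rep : rep_witness (@fvb_rel n) norels (@theta2 n) (letter_act (@theta2 n)).
Proof.
apply: rep_witness_of_relators fvb_rel_square _ _ => [l r []|q q_rel].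
by apply/theta2_acts_trivially; apply: relator_trivial_track.
Qed.

Lemma theta3_rep : rep_witness (@fvb_rel n) (@K_rel n) (@theta3 n) (letter_act (@theta3 n)).
Proof.
apply: rep_witness_of_relators fvb_rel_square _ _ => [l|q q_rel].
  exact: K_hom (theta3_y l) (theta3_z l).
by apply/theta3_acts_trivially; apply: relator_trivial_track.
Qed.

Lemma theta4_rep : rep_witness (@fvb_rel n) (@K_rel n) (@theta4 n) (letter_act (@theta4 n)).
Proof.
apply: rep_witness_of_relators fvb_rel_square _ _ => [l|q q_rel].
  exact: K_hom (theta4_y l) (theta4_z l).
by apply/theta4_acts_trivially; apply: relator_trivial_track.
Qed.

End Witnesses.

Theorem theorem6 (n : nat) (hn : 2 <= n) :
  (* (1) the assignments extend to representations *)
  ((forall m : int, extends_to_rep (@fvb_rel n) norels (theta1 m))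
   /\ extends_to_rep (@fvb_rel n) norels (@theta2 n)
   /\ extends_to_rep (@fvb_rel n) (@K_rel n) (@theta3 n)
   /\ extends_to_rep (@fvb_rel n) (@K_rel n) (@theta4 n))
  /\
  (* (2) equality of kernels (as sets of words representing elements of FVB_n) *)
  ((forall m : int, m != 0 -> forall w : word (fvb_gen n),
      in_ker (@fvb_rel n) norels (theta1 m) w <-> in_ker (@fvb_rel n) norels (@theta n) w)
   /\ (forall w : word (fvb_gen n),
      in_ker (@fvb_rel n) norels (@theta2 n) w <-> in_ker (@fvb_rel n) norels (@theta n) w)
   /\ (forall w : word (fvb_gen n),
      in_ker (@fvb_rel n) (@K_rel n) (@theta3 n) w <-> in_ker (@fvb_rel n) norels (@theta n) w)
   /\ (forall w : word (fvb_gen n),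
      in_ker (@fvb_rel n) (@K_rel n) (@theta4 n) w <-> in_ker (@fvb_rel n) norels (@theta n) w)).
Proof.
have ker_theta w : in_ker (@fvb_rel n) norels (@theta n) w <-> trivial_track w.
  by rewrite (in_kerE _ (theta_rep n)); apply: theta_acts_trivially.
split.
  split; first by move=> m; exists (letter_act (theta1 m)); apply: theta1_rep.
  split; first by exists (letter_act (@theta2 n)); apply: theta2_rep.
  by split; [exists (letter_act (@theta3 n)); apply: theta3_rep
            | exists (letter_act (@theta4 n)); apply: theta4_rep].
split; [move=> m m0 w | split; [|split] => w]; rewrite ker_theta.
- by rewrite (in_kerE _ (theta1_rep n m)); apply: theta1_acts_trivially.
- by rewrite (in_kerE _ (theta2_rep n)); apply: theta2_acts_trivially.
- by rewrite (in_kerE _ (theta3_rep n)); apply: theta3_acts_trivially.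
- by rewrite (in_kerE _ (theta4_rep n)); apply: theta4_acts_trivially.
Qed.
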